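(* Let $G$ be a group acting on a set $X$ and $f:\mathcal{P}_{\mathrm{fin}}(X)\to\mathbb{R}$ a $G$-invariant submodular function such that the minimum $m=\min_{Y\in\mathcal{P}_{\mathrm{fin}}(X),\,Y\neq\emptyset}f(Y)$ exists. Let $\mathcal{A}$ be the set of atoms for $f$ and $\mathcal{C}(X)=\bigcup_{Y_0\in\mathcal{A}}Y_0$ (the core of $X$). Then: (0) for every atom $Y_0$ and every $g\in G$, $g\cdot Y_0$ is an atom and either $g\cdot Y_0=Y_0$ or $g\cdot Y_0\cap Y_0=\emptyset$; distinct atoms are disjoint; (1) $G$ acts on $\mathcal{A}$ by $(g,Y_0)\mapsto g\cdot Y_0$; (2) $g\cdot\mathcal{C}(X)=\mathcal{C}(X)$ for all $g\in G$, so $\mathcal{C}(X)$, the disjoint union of the atoms, is a disjoint union of $G$-orbits in $X$; (3) for any atom $Y_0$ and any $y_0\in Y_0$ one has $G_{y_0}\subset G_{Y_0}$; and for any $G$-orbit $\mathcal{O}$ and atom $Y_0$, either $\mathcal{O}\cap Y_0=\emptyset$ or, for any $y_0\in\mathcal{O}\cap Y_0$, $\mathcal{O}\cap Y_0=\{g\cdot y_0\mid g\in G_{Y_0}\}$ and the map $gG_{y_0}\mapsto g\cdot y_0$ is a bijection from $G_{Y_0}/G_{y_0}$ onto $\mathcal{O}\cap Y_0$. Furthermore, when the action of $G$ on $X$ is transitive, $\mathcal{C}(X)=X$, i.e. each element of $X$ belongs to an atom (and the atoms partition $X$).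
   Context: $\mathcal{P}_{\mathrm{fin}}(X)$ is the set of finite subsets of $X$. $f$ is submodular if $f(Y\cap Z)+f(Y\cup Z)\leq f(Y)+f(Z)$ for all finite $Y,Z\subset X$, and $G$-invariant if $f(g\cdot Y)=f(Y)$ for all $g\in G$, where $g\cdot Y=\{g\cdot y\mid y\in Y\}$. A fragment for $f$ is a nonempty finite $Y\subset X$ with $f(Y)=m$; an atom is a fragment of minimum cardinality among fragments. $G_{y}=\{g\in G\mid g\cdot y=y\}$ and $G_Y=\{g\in G\mid g\cdot Y=Y\}$. *)

From HB Require Import structures.
From mathcomp Require Import all_boot.
From mathcomp Require Import finmap.
From Stdlib Require Import Reals.

Set Implicit Arguments.
Unset Strict Implicit.
Unset Printing Implicit Defensive.

Local Open Scope fset_scope.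

Definition is_group {G : Type} (mul : G -> G -> G) (one : G) (inv : G -> G) : Prop :=
  (forall a b c, mul a (mul b c) = mul (mul a b) c) /\
  (forall a, mul one a = a) /\ (forall a, mul a one = a) /\
  (forall a, mul (inv a) a = one) /\ (forall a, mul a (inv a) = one).

Definition is_group_action {G X : Type} (mul : G -> G -> G) (one : G)
    (act : G -> X -> X) : Prop :=
  (forall x, act one x = x) /\ (forall g h x, act (mul g h) x = act g (act h x)).

Definition act_set {G : Type} {X : choiceType} (act : G -> X -> X) (g : G)
    (Y : {fset X}) : {fset X} := [fset act g y | y in Y].

Definition submodular {X : choiceType} (f : {fset X} -> R) : Prop :=
  forall Y Z : {fset X}, (f (Y `&` Z) + f (Y `|` Z) <= f Y + f Z)%R.

Definition G_invariant {G : Type} {X : choiceType} (act : G -> X -> X)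
    (f : {fset X} -> R) : Prop :=
  forall g Y, f (act_set act g Y) = f Y.

Definition is_min_nonempty {X : choiceType} (f : {fset X} -> R) (m : R) : Prop :=
  (exists Y : {fset X}, Y != fset0 /\ f Y = m) /\
  (forall Y : {fset X}, Y != fset0 -> (m <= f Y)%R).

Definition fragment {X : choiceType} (f : {fset X} -> R) (m : R) (Y : {fset X}) : Prop :=
  Y != fset0 /\ f Y = m.

Definition atom {X : choiceType} (f : {fset X} -> R) (m : R) (Y : {fset X}) : Prop :=
  fragment f m Y /\ (forall Z, fragment f m Z -> #|` Y| <= #|` Z|).

Definition core {X : choiceType} (f : {fset X} -> R) (m : R) (x : X) : Prop :=
  exists Y0, atom f m Y0 /\ x \in Y0.

Definition is_orbit {G X : Type} (act : G -> X -> X) (O : X -> Prop) : Prop :=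
  exists x, forall z, O z <-> exists g, act g x = z.

From mathcomp Require Import all_boot.
From mathcomp Require Import finmap.
From Stdlib Require Import Reals Lra Classical.

(* If two atoms A, B meet, then f (A :&: B) + f (A :|: B) <= 2m forces both
   terms to equal m, so A :&: B is a fragment inside A and B; minimality of
   their cardinality gives A = A :&: B = B.  Since f is G-invariant and g acts
   injectively, g.A is again an atom, so g.A = A or g.A and A are disjoint.
   In the transitive case an atom (which exists since m is attained) is moved
   onto any point. *)

Set Implicit Arguments.
Unset Strict Implicit.
Unset Printing Implicit Defensive.

Local Open Scope fset_scope.

Lemma exists_min_card (X : choiceType) (P : {fset X} -> Prop) :
  (exists Y, P Y) -> exists Y, P Y /\ forall Z, P Z -> #|` Y| <= #|` Z|.
Proof.
move=> [Y PY]; have [n] := ubnP #|` Y|; elim: n Y PY => // n IH Y PY.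
rewrite ltnS => cardY.
case: (classic (exists2 Z, P Z & #|` Z| < #|` Y|)) => [[Z PZ ltZY] | noZ].
  by apply: (IH Z PZ); apply: leq_trans ltZY cardY.
by exists Y; split=> // Z PZ; rewrite leqNgt; apply/negP => ltZY; apply: noZ; exists Z.
Qed.

Section Atoms.

Variables (X : choiceType) (f : {fset X} -> R) (m : R).
Hypothesis f_submod : submodular f.
Hypothesis m_min : is_min_nonempty f m.

Lemma atom_exists : exists A, atom f m A.
Proof. by case: m_min => [[Y [Y0 fY]] _]; apply: exists_min_card; exists Y. Qed.

Lemma atoms_meet_eq (A B : {fset X}) :
  atom f m A -> atom f m B -> A `&` B != fset0 -> A = B.
Proof.
case: m_min => _ m_le [[A0 fA] minA] [[B0 fB] minB] AB0.
have AUB0 : A `|` B != fset0 by rewrite fsetU_eq0 negb_and A0.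
have submodAB := f_submod A B; have m_le_AB := m_le _ AB0; have m_le_AUB := m_le _ AUB0.
have fragAB : fragment f m (A `&` B) by split => //; lra.
have /eqP AB_A : A `&` B == A by rewrite eqEfcard fsubsetIl minA.
have /eqP AB_B : A `&` B == B by rewrite eqEfcard fsubsetIr minB.
by rewrite -AB_A -[RHS]AB_B.
Qed.

Lemma atoms_common_mem (A B : {fset X}) (z : X) :
  atom f m A -> atom f m B -> z \in A -> z \in B -> A = B.
Proof.
move=> atA atB zA zB; apply: atoms_meet_eq => //.
by apply/fset0Pn; exists z; rewrite in_fsetI zA zB.
Qed.

Lemma atoms_disjoint (A B : {fset X}) :
  atom f m A -> atom f m B -> A <> B -> A `&` B = fset0.
Proof.
move=> atA atB neAB; apply/eqP; apply: contraNT (introN eqP neAB).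
by move/(atoms_meet_eq atA atB) ->.
Qed.

End Atoms.

Section Action.

Variables (G : Type) (mul : G -> G -> G) (one : G) (inv : G -> G).
Variables (X : choiceType) (act : G -> X -> X).
Hypothesis G_group : is_group mul one inv.
Hypothesis act_action : is_group_action mul one act.

Lemma act1 x : act one x = x.
Proof. by case: act_action. Qed.

Lemma actM g h x : act (mul g h) x = act g (act h x).
Proof. by case: act_action. Qed.

Lemma actK g : cancel (act g) (act (inv g)).
Proof. by case: G_group => [_ [_ [_ [mulVg _]]]] x; rewrite -actM mulVg act1. Qed.

Lemma actVK g : cancel (act (inv g)) (act g).
Proof. by case: G_group => [_ [_ [_ [_ mulgV]]]] x; rewrite -actM mulgV act1. Qed.

Lemma act_inj g : injective (act g).
Proof. exact: can_inj (actK g). Qed.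

Lemma mem_act_set g (Y : {fset X}) z :
  reflect (exists2 y, y \in Y & z = act g y) (z \in act_set act g Y).
Proof. exact: imfsetP. Qed.

Lemma mem_act_set_act g (Y : {fset X}) y : y \in Y -> act g y \in act_set act g Y.
Proof. exact: in_imfset. Qed.

Lemma card_act_set g (Y : {fset X}) : #|` act_set act g Y| = #|` Y|.
Proof. exact: card_imfset (@act_inj g). Qed.

Lemma act_set1 (Y : {fset X}) : act_set act one Y = Y.
Proof.
apply/fsetP => z; apply/mem_act_set/idP => [[y yY ->] | zY]; first by rewrite act1.
by exists z; rewrite ?act1.
Qed.

Lemma act_setM g h (Y : {fset X}) :
  act_set act (mul g h) Y = act_set act g (act_set act h Y).
Proof.
apply/fsetP => z; apply/mem_act_set/mem_act_set => [[y yY ->] | [_ /mem_act_set [y yY ->] ->]].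
  by exists (act h y); rewrite ?actM ?mem_act_set_act.
by exists y; rewrite ?actM.
Qed.

Lemma act_eq_iff_fixed g h y : act g y = act h y <-> act (mul (inv g) h) y = y.
Proof. by rewrite actM; split=> [<- | E]; [rewrite actK | rewrite -{1}E actVK]. Qed.

Lemma orbit_act (O : X -> Prop) g y : is_orbit act O -> O y -> O (act g y).
Proof. by move=> [x Ox] /Ox [k <-]; apply/Ox; exists (mul g k); rewrite actM. Qed.

Lemma orbit_transitive (O : X -> Prop) y z :
  is_orbit act O -> O y -> O z -> exists g, act g y = z.
Proof.
by move=> [x Ox] /Ox [k <-] /Ox [h <-]; exists (mul h (inv k)); rewrite actM actK.
Qed.

Variables (f : {fset X} -> R) (m : R).
Hypothesis f_inv : G_invariant act f.

Lemma atom_act_set g (Y : {fset X}) : atom f m Y -> atom f m (act_set act g Y).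
Proof.
move=> [[Y0 fY] minY]; split; [split|].
- by case/fset0Pn: Y0 => y yY; apply/fset0Pn; exists (act g y); apply: mem_act_set_act.
- by rewrite f_inv.
- by move=> Z fragZ; rewrite card_act_set; apply: minY.
Qed.

Lemma core_act g x : core f m x -> core f m (act g x).
Proof.
move=> [Y [atY xY]]; exists (act_set act g Y).
by split; [apply: atom_act_set | apply: mem_act_set_act].
Qed.

Lemma core_actE g x : core f m (act g x) <-> core f m x.
Proof. by split=> [/(core_act (inv g)) | ]; [rewrite actK | apply: core_act]. Qed.

Hypothesis m_min : is_min_nonempty f m.

Lemma core_of_transitive : (forall x y, exists g, act g x = y) -> forall x, core f m x.
Proof.
move=> transitive x; have [A atA] := atom_exists m_min.
have [y yA] := fset0Pn _ (proj1 (proj1 atA)); have [g <-] := transitive y x.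
by apply: core_act; exists A.
Qed.

Hypothesis f_submod : submodular f.

Lemma atom_act_set_id g (Y : {fset X}) y :
  atom f m Y -> y \in Y -> act g y \in Y -> act_set act g Y = Y.
Proof.
move=> atY yY gyY; apply: (atoms_common_mem f_submod m_min (atom_act_set g atY) atY _ gyY).
exact: mem_act_set_act.
Qed.

Lemma atom_act_set_id_or_disjoint g (Y : {fset X}) :
  atom f m Y -> act_set act g Y = Y \/ act_set act g Y `&` Y = fset0.
Proof.
move=> atY; have [-> | /fset0Pn [z]] := eqVneq (act_set act g Y `&` Y) fset0; first by right.
rewrite in_fsetI => /andP [zgY zY]; left.
exact: (atoms_common_mem f_submod m_min (atom_act_set g atY) atY zgY zY).
Qed.

Lemma orbit_meet_atom (O : X -> Prop) (Y : {fset X}) y z :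
  is_orbit act O -> atom f m Y -> O y -> y \in Y ->
  (O z /\ z \in Y) <-> exists g, act_set act g Y = Y /\ act g y = z.
Proof.
move=> orbO atY Oy yY; split=> [[Oz zY] | [g [gY <-]]].
  have [g gyz] := orbit_transitive orbO Oy Oz.
  by exists g; split=> //; apply: (atom_act_set_id atY yY); rewrite gyz.
by split; [apply: orbit_act | rewrite -gY mem_act_set_act].
Qed.

End Action.

Theorem mainTheorem7 (G : Type) (mul : G -> G -> G) (one : G) (inv : G -> G)
  (X : choiceType) (act : G -> X -> X) (f : {fset X} -> R) (m : R) :
  is_group mul one inv ->
  is_group_action mul one act ->
  G_invariant act f ->
  submodular f ->
  is_min_nonempty f m ->
  (* (0) *)
  (forall (Y0 : {fset X}) (g : G), atom f m Y0 ->
      atom f m (act_set act g Y0) /\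
      (act_set act g Y0 = Y0 \/ act_set act g Y0 `&` Y0 = fset0)) /\
  (forall Y0 Y1 : {fset X}, atom f m Y0 -> atom f m Y1 -> Y0 <> Y1 ->
      Y0 `&` Y1 = fset0) /\
  (* (1) *)
  (forall Y0 : {fset X}, atom f m Y0 ->
      act_set act one Y0 = Y0 /\
      (forall g h : G, act_set act (mul g h) Y0 = act_set act g (act_set act h Y0))) /\
  (* (2) *)
  (forall (g : G) (x : X), core f m (act g x) <-> core f m x) /\
  (* (3) *)
  (forall (Y0 : {fset X}) (y0 : X), atom f m Y0 -> y0 \in Y0 ->
      forall g : G, act g y0 = y0 -> act_set act g Y0 = Y0) /\
  (forall (O : X -> Prop) (Y0 : {fset X}), is_orbit act O -> atom f m Y0 ->
      (forall y, O y -> y \notin Y0) \/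
      (forall y0, O y0 -> y0 \in Y0 ->
         (forall z, (O z /\ z \in Y0) <->
                    exists g, act_set act g Y0 = Y0 /\ act g y0 = z) /\
         (forall g h : G, act_set act g Y0 = Y0 -> act_set act h Y0 = Y0 ->
            (act g y0 = act h y0 <-> act (mul (inv g) h) y0 = y0)))) /\
  (* transitive case *)
  ((forall x y : X, exists g, act g x = y) -> forall x : X, core f m x).
Proof.
move=> grp action f_inv f_submod m_min.
split.
  move=> Y g atY; split; first exact: (atom_act_set grp action f_inv).
  exact: (atom_act_set_id_or_disjoint grp action f_inv m_min f_submod).
split; first exact: atoms_disjoint.
split; first by move=> Y _; split=> [|g h]; [apply: (act_set1 action) | apply: (act_setM action)].
split; first exact: (core_actE grp action m f_inv).
split.
  move=> Y y atY yY g gy.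
  by apply: (atom_act_set_id grp action f_inv m_min f_submod atY yY); rewrite gy.
split; last exact: (core_of_transitive grp action f_inv m_min).
move=> O Y orbO atY; right=> y Oy yY; split=> [z | g h _ _].
  exact: (orbit_meet_atom grp action f_inv m_min f_submod).
exact: (act_eq_iff_fixed grp action).
Qed.
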